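(* For every $p>1$, the function $t\mapsto\dot H_e(t/p)/\dot H_e(t)$ is increasing on $(0,\ln2)$.
   Context: $\dot H_e(t)=te^{-t}-(1-e^{-t})\ln(1-e^{-t})$ for $t>0$. *)

From Stdlib Require Import Reals.
Open Scope R_scope.

Definition Hdot_e (t : R) : R :=
  t * exp (- t) - (1 - exp (- t)) * ln (1 - exp (- t)).

From Stdlib Require Import Reals Lra.
From Coquelicot Require Import Coquelicot.
Open Scope R_scope.

(* Write H := Hdot_e.  For p > 1 the ratio H(t/p)/H(t) has derivative of the
   sign of  E(t/p) - E(t), where  E(t) = t H'(t) / H(t)  is the elasticity of
   H; so it suffices that E is strictly decreasing on (0, ln 2).
   E = F/H with F(t) = t H'(t), and we prove this by the monotone l'Hospital
   rule: if F'/H' is strictly decreasing, H' > 0, and F, H > 0 with H -> 0 at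
   the left end point, then F/H is strictly decreasing. *)

Lemma continuity_pt_of_is_derive (f : R -> R) x l :
  is_derive f x l -> continuity_pt f x.
Proof.
  intros Hf. apply continuity_pt_filterlim, (ex_derive_continuous f).
  now exists l.
Qed.

Section MonotoneLHospital.

Variables (a b : R) (f g f' g' : R -> R).
Hypothesis f_deriv : forall x, a < x < b -> is_derive f x (f' x).
Hypothesis g_deriv : forall x, a < x < b -> is_derive g x (g' x).
Hypothesis g'_pos : forall x, a < x < b -> 0 < g' x.
Hypothesis f_pos : forall x, a < x < b -> 0 < f x.
Hypothesis g_pos : forall x, a < x < b -> 0 < g x.
Hypothesis g_vanishes : forall d u, 0 < d -> a < u -> exists e, a < e < u /\ g e < d.

Let r x := f' x / g' x.
Hypothesis r_decr : forall x y, a < x -> x < y -> y < b -> r y < r x.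

Lemma r_nonincr x y : a < x -> x <= y -> y < b -> r y <= r x.
Proof.
  intros Hx Hxy Hy. destruct (Rle_lt_or_eq_dec _ _ Hxy) as [Hlt | ->].
  - now apply Rlt_le, r_decr.
  - apply Rle_refl.
Qed.

Lemma g_incr x y : a < x -> x < y -> y < b -> g x < g y.
Proof.
  apply (incr_function g a b g'); simpl.
  - intros; apply g_deriv; lra.
  - intros; apply g'_pos; lra.
Qed.

Lemma cauchy_mvt k u t : a < u -> u < t -> t < b ->
  exists c, u <= c <= t /\
    (f t - k * g t) - (f u - k * g u) = g' c * (r c - k) * (t - u).
Proof.
  intros Hu Hut Ht.
  assert (Hderiv : forall x, u <= x <= t ->
            is_derive (fun x => f x - k * g x) x (f' x - k * g' x)).
  { intros x Hx. apply (is_derive_minus f (fun x => k * g x)).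
    - apply f_deriv; lra.
    - apply is_derive_scal, g_deriv; lra. }
  destruct (MVT_gen (fun x => f x - k * g x) u t (fun x => f' x - k * g' x))
    as [c [Hc Hmvt]];
    rewrite ?Rmin_left, ?Rmax_right in * by lra.
  - intros x Hx. apply Hderiv. lra.
  - intros x Hx. eapply continuity_pt_of_is_derive, Hderiv. lra.
  - exists c. split; [exact Hc |]. rewrite Hmvt.
    assert (0 < g' c) by (apply g'_pos; lra).
    unfold r. field. lra.
Qed.

Lemma shifted_le_left u t : a < u -> u < t -> t < b ->
  f u - r t * g u <= f t - r t * g t.
Proof.
  intros Hu Hut Ht. destruct (cauchy_mvt (r t) u t) as [c [Hc Hmvt]]; try lra.
  assert (r t <= r c) by (apply r_nonincr; lra).
  assert (0 < g' c) by (apply g'_pos; lra).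
  assert (0 <= g' c * (r c - r t) * (t - u))
    by (apply Rmult_le_pos; [apply Rmult_le_pos |]; lra).
  lra.
Qed.

Lemma shifted_le_right u t : a < u -> u < t -> t < b ->
  f t - r u * g t <= f u - r u * g u.
Proof.
  intros Hu Hut Ht. destruct (cauchy_mvt (r u) u t) as [c [Hc Hmvt]]; try lra.
  assert (r c <= r u) by (apply r_nonincr; lra).
  assert (0 < g' c) by (apply g'_pos; lra).
  assert (0 <= g' c * (r u - r c) * (t - u))
    by (apply Rmult_le_pos; [apply Rmult_le_pos |]; lra).
  lra.
Qed.

(* Letting the left end point go to a gives  r(u) <= f(u)/g(u). *)
Lemma deriv_ratio_le_ratio u : a < u -> u < b -> r u * g u <= f u.
Proof.
  intros Hu Hub.
  assert (Hfu := f_pos u (conj Hu Hub)). assert (Hgu := g_pos u (conj Hu Hub)).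
  destruct (Rle_or_lt (r u) 0) as [Hr | Hr]; [nra |].
  apply Rnot_lt_le. intros Hcontra.
  destruct (g_vanishes ((r u * g u - f u) / r u) u) as [e [He Hge]]; auto.
  { apply Rdiv_lt_0_compat; lra. }
  assert (Hshift := shifted_le_left e u ltac:(lra) ltac:(lra) Hub).
  assert (f e > 0) by (apply f_pos; lra).
  apply (Rmult_lt_compat_r (r u)) in Hge; [| exact Hr].
  unfold Rdiv in Hge. rewrite Rmult_assoc, Rinv_l in Hge by lra.
  lra.
Qed.

(* Strictness: compare with a point m between a and u, where r(m) > r(u). *)
Lemma deriv_ratio_lt_ratio u : a < u -> u < b -> r u * g u < f u.
Proof.
  intros Hu Hub. set (m := (a + u) / 2).
  assert (Hle := deriv_ratio_le_ratio m ltac:(unfold m; lra) ltac:(unfold m; lra)).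
  assert (Hshift := shifted_le_left m u ltac:(unfold m; lra) ltac:(unfold m; lra) Hub).
  assert (r u < r m) by (apply r_decr; unfold m; lra).
  assert (0 < g m) by (apply g_pos; unfold m; lra).
  nra.
Qed.

Lemma ratio_decr u t : a < u -> u < t -> t < b -> f t * g u < f u * g t.
Proof.
  intros Hu Hut Ht.
  assert (Hshift := shifted_le_right u t Hu Hut Ht).
  assert (Hlt := deriv_ratio_lt_ratio u Hu ltac:(lra)).
  assert (Hgut := g_incr u t Hu Hut Ht).
  assert (0 < g u) by (apply g_pos; lra).
  nra.
Qed.

End MonotoneLHospital.

Lemma shrink_by_factor x p : 0 < x -> 1 < p -> 0 < x / p < x.
Proof.
  intros Hx Hp. split; [apply Rdiv_lt_0_compat; lra |].
  apply Rmult_lt_reg_r with p; [lra |].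
  unfold Rdiv. rewrite Rmult_assoc, Rinv_l; nra.
Qed.

Section DilationRatio.

Variables (b : R) (H H' : R -> R).
Hypothesis H_deriv : forall x, 0 < x < b -> is_derive H x (H' x).
Hypothesis H_pos : forall x, 0 < x < b -> 0 < H x.
Hypothesis elasticity_decr :
  forall u t, 0 < u -> u < t -> t < b -> t * H' t * H u < u * H' u * H t.

Lemma dilation_ratio_incr p : 1 < p ->
  forall s t, 0 < s -> s < t -> t < b -> H (s / p) / H s < H (t / p) / H t.
Proof.
  intros Hp.
  apply (incr_function (fun x => H (x / p) / H x) 0 b
    (fun x => (/ p * H' (x / p) * H x - H (x / p) * H' x) / H x ^ 2));
    simpl; intros x Hx Hxb.
  - assert (Hxp := shrink_by_factor x p Hx Hp).
    assert (0 < H x) by (apply H_pos; lra).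
    apply (is_derive_div (fun x => H (x / p)) H x); [| apply H_deriv; lra | lra].
    apply (is_derive_comp H (fun x => x / p) x (H' (x / p)) (/ p)).
    + apply H_deriv; lra.
    + auto_derive; [exact I | field; lra].
  - assert (Hxp := shrink_by_factor x p Hx Hp).
    assert (Hel := elasticity_decr (x / p) x ltac:(lra) ltac:(lra) Hxb).
    assert (0 < H x) by (apply H_pos; lra).
    apply Rdiv_lt_0_compat; [| apply Rmult_lt_0_compat; lra].
    apply Rmult_lt_reg_l with x; [lra |].
    replace (x * (/ p * H' (x / p) * H x - H (x / p) * H' x))
      with (x / p * H' (x / p) * H x - x * H' x * H (x / p)) by (field; lra).
    lra.
Qed.

End DilationRatio.

Lemma exp_neg_lt_1 t : 0 < t -> exp (- t) < 1.
Proof. intros Ht. rewrite <- exp_0. apply exp_increasing. lra. Qed.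

(* For t < ln 2 we have 1 - e^{-t} < e^{-t}, hence  -t - ln(1 - e^{-t}) > 0. *)
Lemma log_gap_pos t : 0 < t -> t < ln 2 -> 0 < - t - ln (1 - exp (- t)).
Proof.
  intros Ht Ht2. assert (Hlt1 := exp_neg_lt_1 t Ht).
  assert (Hhalf : / 2 < exp (- t)).
  { replace (/ 2) with (exp (- ln 2)) by (rewrite exp_Ropp, exp_ln; lra).
    apply exp_increasing. lra. }
  assert (ln (1 - exp (- t)) < ln (exp (- t))) by (apply ln_increasing; lra).
  rewrite ln_exp in *. lra.
Qed.

Definition dHdot_e (t : R) : R := exp (- t) * (- t - ln (1 - exp (- t))).

Lemma Hdot_e_derive t : 0 < t -> is_derive Hdot_e t (dHdot_e t).
Proof.
  intros Ht. assert (Hlt1 := exp_neg_lt_1 t Ht).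
  unfold Hdot_e, dHdot_e. auto_derive; [lra | unfold Rminus; field; lra].
Qed.

Lemma dHdot_e_pos t : 0 < t -> t < ln 2 -> 0 < dHdot_e t.
Proof.
  intros Ht Ht2. apply Rmult_lt_0_compat; [apply exp_pos | now apply log_gap_pos].
Qed.

(* Both terms of Hdot_e are positive on (0, ln 2). *)
Lemma Hdot_e_pos t : 0 < t -> t < ln 2 -> 0 < Hdot_e t.
Proof.
  intros Ht Ht2. assert (Hlt1 := exp_neg_lt_1 t Ht).
  assert (Hexp := exp_pos (- t)).
  assert (ln (1 - exp (- t)) < 0) by (rewrite <- ln_1; apply ln_increasing; lra).
  unfold Hdot_e. nra.
Qed.

Definition dF (t : R) : R :=
  dHdot_e t - t * dHdot_e t - t * exp (- t) / (1 - exp (- t)).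

Lemma F_derive t : 0 < t -> is_derive (fun t => t * dHdot_e t) t (dF t).
Proof.
  intros Ht. assert (Hlt1 := exp_neg_lt_1 t Ht).
  unfold dF, dHdot_e. auto_derive; [lra | unfold Rminus; field; lra].
Qed.

Lemma dF_ratio_formula t : 0 < t -> t < ln 2 ->
  dF t / dHdot_e t = 1 - t - t / (1 - exp (- t)) / (- t - ln (1 - exp (- t))).
Proof.
  intros Ht Ht2. assert (Hlt1 := exp_neg_lt_1 t Ht).
  assert (Hgap := log_gap_pos t Ht Ht2). assert (Hexp := exp_pos (- t)).
  unfold dF, dHdot_e. field. lra.
Qed.

(* t / (1 - e^{-t}) increases, as  1 - e^{-t} - t e^{-t} > 0  by  e^t > 1 + t. *)
Lemma t_div_one_minus_exp_incr s t : 0 < s -> s < t ->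
  s / (1 - exp (- s)) < t / (1 - exp (- t)).
Proof.
  intros Hs Hst.
  apply (incr_function (fun t => t / (1 - exp (- t))) 0 p_infty
    (fun t => ((1 - exp (- t)) - t * exp (- t)) / (1 - exp (- t)) ^ 2));
    [| | exact Hs | exact Hst | exact I];
    simpl; intros x Hx _; assert (Hlt1 := exp_neg_lt_1 x Hx).
  - auto_derive; [lra | unfold Rminus; field; lra].
  - assert (1 + x < exp x) by (apply exp_ineq1; lra).
    assert (exp (- x) * exp x = 1)
      by (rewrite <- exp_plus; replace (- x + x) with 0 by ring; apply exp_0).
    assert (0 < exp (- x)) by apply exp_pos.
    apply Rdiv_lt_0_compat; nra.
Qed.

Lemma dF_ratio_decr s t : 0 < s -> s < t -> t < ln 2 ->
  dF t / dHdot_e t < dF s / dHdot_e s.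
Proof.
  intros Hs Hst Ht.
  rewrite !dF_ratio_formula by lra.
  assert (Hlt1 := exp_neg_lt_1 s Hs).
  assert (exp (- t) < exp (- s)) by (apply exp_increasing; lra).
  assert (ln (1 - exp (- s)) < ln (1 - exp (- t))) by (apply ln_increasing; lra).
  assert (Hnum := t_div_one_minus_exp_incr s t Hs Hst).
  assert (0 < s / (1 - exp (- s))) by (apply Rdiv_lt_0_compat; lra).
  assert (Hgap := log_gap_pos t ltac:(lra) Ht).
  assert (s / (1 - exp (- s)) / (- s - ln (1 - exp (- s)))
          < t / (1 - exp (- t)) / (- t - ln (1 - exp (- t)))).
  { unfold Rdiv at 2 4.
    apply Rlt_le_trans with (t / (1 - exp (- t)) * / (- s - ln (1 - exp (- s)))).
    - apply Rmult_lt_compat_r; [apply Rinv_0_lt_compat |]; lra.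
    - apply Rmult_le_compat_l; [lra |].
      apply Rlt_le, Rinv_lt_contravar; nra. }
  lra.
Qed.

(* ln z < z, from e^z >= 1 + z. *)
Lemma ln_lt_self z : 0 < z -> ln z < z.
Proof.
  intros Hz. rewrite <- (ln_exp z) at 2. apply ln_increasing; [exact Hz |].
  pose proof (exp_ineq1_le z). lra.
Qed.

Lemma xlnx_le_sqrt w : 0 < w < 1 -> w * - ln w < 2 * sqrt w.
Proof.
  intros Hw. set (r := sqrt w).
  assert (Hr : r * r = w) by (apply sqrt_sqrt; lra).
  assert (0 < r) by (apply sqrt_lt_R0; lra).
  assert (Hlnw : ln w = 2 * ln r) by (rewrite <- Hr, ln_mult by lra; ring).
  assert (Hlninv : ln (/ r) < / r)
    by (apply ln_lt_self, Rinv_0_lt_compat; lra).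
  rewrite ln_Rinv in Hlninv by lra.
  rewrite Hlnw, <- Hr.
  assert (r * r * / r = r) by (field; lra).
  nra.
Qed.

Lemma Hdot_e_vanishes d u : 0 < d -> 0 < u ->
  exists e, 0 < e < u /\ Hdot_e e < d.
Proof.
  intros Hd Hu.
  set (e := Rmin (u / 2) (Rmin (d / 4) ((d / 4) * (d / 4)))).
  assert (e <= u / 2) by apply Rmin_l.
  assert (e <= d / 4) by (eapply Rle_trans; [apply Rmin_r | apply Rmin_l]).
  assert (e <= (d / 4) * (d / 4)) by (eapply Rle_trans; [apply Rmin_r | apply Rmin_r]).
  assert (0 < e) by (unfold e; repeat apply Rmin_glb_lt; nra).
  exists e. split; [lra |].
  assert (Hlt1 := exp_neg_lt_1 e ltac:(lra)).
  assert (Hexp := exp_pos (- e)).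
  assert (Hlin := exp_ineq1_le (- e)).
  assert (Hent := xlnx_le_sqrt (1 - exp (- e)) ltac:(lra)).
  assert (Hsqrt : sqrt (1 - exp (- e)) <= sqrt ((d / 4) * (d / 4)))
    by (apply sqrt_le_1_alt; lra).
  rewrite sqrt_square in Hsqrt by lra.
  unfold Hdot_e. nra.
Qed.

Theorem mainTheorem18 (p : R) (hp : 1 < p) :
  forall s t : R, 0 < s -> s < t -> t < ln 2 ->
    Hdot_e (s / p) / Hdot_e s < Hdot_e (t / p) / Hdot_e t.
Proof.
  apply (dilation_ratio_incr (ln 2) Hdot_e dHdot_e); [| | | exact hp].
  - intros x Hx. apply Hdot_e_derive. lra.
  - intros x Hx. apply Hdot_e_pos; lra.
  - (* the elasticity of Hdot_e decreases, by the monotone l'Hospital rule *)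
    apply (ratio_decr 0 (ln 2) (fun t => t * dHdot_e t) Hdot_e dF dHdot_e).
    + intros x Hx. apply F_derive. lra.
    + intros x Hx. apply Hdot_e_derive. lra.
    + intros x Hx. apply dHdot_e_pos; lra.
    + intros x Hx. apply Rmult_lt_0_compat; [lra | apply dHdot_e_pos; lra].
    + intros x Hx. apply Hdot_e_pos; lra.
    + intros d u Hd Hu. now apply Hdot_e_vanishes.
    + exact dF_ratio_decr.
Qed.
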